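(* Let $X\subseteq\mathbb{R}^d$ be compact, $\theta\in(0,1]$ and $0\leq s\leq d$. Then for all $0<r\leq1$ and every finite cover $\{U_i\}_i$ of $X$ by sets with $r\leq|U_i|\leq r^\theta$, \[ \sum_i|U_i|^s\ \geq\ r^s\,C_{r,\theta}^{s,d}(X). \]
   Context: $|U|$ denotes diameter. For $0\leq s\leq d$ and $0<r\leq1$, define on $\mathbb{R}^d$ the kernel $\phi_{r,\theta}^{s,d}(x)=1$ if $|x|<r$, $=(r/|x|)^s$ if $r\leq|x|<r^\theta$, and $=r^{\theta(d-s)+s}/|x|^d$ if $r^\theta\leq|x|$. For compact $X$, $C_{r,\theta}^{s,d}(X)=\big(\inf_\mu\iint\phi_{r,\theta}^{s,d}(x-y)\,d\mu(x)\,d\mu(y)\big)^{-1}$, the infimum taken over Borel probability measures $\mu$ supported on $X$. *)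

From HB Require Import structures.
From mathcomp Require Import all_boot all_order all_algebra.
From mathcomp Require Import all_classical all_reals all_analysis.
Import numFieldNormedType.Exports.
Set Implicit Arguments. Unset Strict Implicit. Unset Printing Implicit Defensive.
Import Order.TTheory GRing.Theory Num.Theory.
Local Open Scope classical_set_scope.
Local Open Scope ring_scope.

Definition enorm (R : realType) (d : nat) (x : 'rV[R]_d) : R :=
  Num.sqrt (\sum_(i < d) x ord0 i ^+ 2).

(* R^d equipped with its Borel sigma-algebra (generated by the open sets
   of the product = Euclidean topology). *)
Definition borelRd (R : realType) (d : nat) :=
  g_sigma_algebraType (@open 'rV[R]_d).

(* Diameter |U| := sup_{x,y in U} |x - y| (in the extended reals;
   -oo for the empty set, +oo for unbounded sets). *)
Definition diam (R : realType) (d : nat) (U : set 'rV[R]_d) : \bar R :=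
  ereal_sup [set (enorm (x - y))%:E | x in U & y in U].

Definition phi (R : realType) (d : nat) (s r theta : R) (x : 'rV[R]_d) : R :=
  if enorm x < r then 1
  else if enorm x < r `^ theta then (r / enorm x) `^ s
  else r `^ (theta * (d%:R - s) + s) / enorm x ^+ d.

Definition energy (R : realType) (d : nat) (s r theta : R)
  (mu : set (borelRd R d) -> \bar R) : \bar R :=
  (\int[mu]_x \int[mu]_y
     (phi s r theta ((x : 'rV[R]_d) - (y : 'rV[R]_d)))%:E)%E.

(* Infimum of the energies over Borel probability measures supported on X
   (i.e. giving zero mass to the complement of X). *)
Definition min_energy (R : realType) (d : nat) (s r theta : R)
  (X : set 'rV[R]_d) : \bar R :=
  ereal_inf [set e | exists mu : probability (borelRd R d) R,
     mu (~` X) = 0%E /\ e = energy s r theta mu].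

(* C_{r,theta}^{s,d}(X) = (inf_mu energy)^{-1}, with the convention
   (+oo)^{-1} = 0 (only occurs when X is empty). *)
Definition capacity (R : realType) (d : nat) (s r theta : R)
  (X : set 'rV[R]_d) : R :=
  match min_energy s r theta X with
  | EFin e => e^-1
  | _ => 0
  end.

From HB Require Import structures.
From mathcomp Require Import all_boot all_order all_algebra.
From mathcomp Require Import all_classical all_reals all_analysis.
From mathcomp Require Import ring.
Import numFieldNormedType.Exports.
Set Implicit Arguments. Unset Strict Implicit. Unset Printing Implicit Defensive.
Import Order.TTheory GRing.Theory Num.Theory.
Local Open Scope classical_set_scope.
Local Open Scope ring_scope.

(* Let mu be a probability measure supported on X.  Refine the closures of
   the U_i into disjoint Borel sets A_i covering X.  If x, y lie in the closure
   of U_i then |x - y| <= |U_i|, and |U_i| lies in [r, r^theta], so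
   phi(x - y) >= c_i := (r / |U_i|)^s; hence the energy of mu is at least
   sum_i c_i mu(A_i)^2.  By Cauchy-Schwarz,
     1 = (sum_i mu(A_i))^2 <= (sum_i c_i mu(A_i)^2) (sum_i 1 / c_i),
   and sum_i 1 / c_i = r^-s sum_i |U_i|^s.  So every energy is at least
   r^s / sum_i |U_i|^s, and so is their infimum. *)

Lemma sum_weighted_sqr_ge (R : realFieldType) (I : finType) (p c : I -> R) :
  (forall i, 0 < c i) ->
  (\sum_i p i) ^+ 2 <= (\sum_i c i * p i ^+ 2) * \sum_i (c i)^-1.
Proof.
move=> c0; set S := \sum_i p i; set A := \sum_i _; set W := \sum_i _.
have W0 : 0 <= W by apply: sumr_ge0 => i _; rewrite invr_ge0 ltW.
have [Wpos|] := ltrP 0 W; last first.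
  move=> W_le0; have W_eq0 : W = 0 by apply/eqP; rewrite eq_le W_le0.
  suff -> : S = 0 by rewrite W_eq0 expr0n mulr0.
  apply: big1 => i _; move/eqP: W_eq0; rewrite psumr_eq0 => [/allP/(_ i)|j _].
    by rewrite mem_index_enum invr_eq0 gt_eqF // => /(_ isT).
  by rewrite invr_ge0 ltW.
(* [0 <= \sum_i (c i p i - lam)^2 / c i = A - S^2 / W] for [lam = S / W] *)
set lam := S / W.
have expand i : (c i * p i - lam) ^+ 2 / c i
    = c i * p i ^+ 2 - 2 * lam * p i + lam ^+ 2 * (c i)^-1.
  by field; rewrite gt_eqF.
have : 0 <= \sum_i (c i * p i - lam) ^+ 2 / c i.
  by apply: sumr_ge0 => i _; rewrite divr_ge0 ?sqr_ge0 ?ltW.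
under eq_bigr do rewrite expand.
rewrite big_split sumrB /= -mulr_sumr -mulr_sumr -/A -/S -/W /lam.
set T := (X in 0 <= X -> _); have -> : T = A - S ^+ 2 / W.
  by rewrite /T; field; rewrite gt_eqF.
by rewrite subr_ge0 ler_pdivrMr.
Qed.

Lemma sum_continuous (R : realType) (T : topologicalType) (I : Type) (s : seq I)
  (f : I -> T -> R) : (forall i, continuous (f i)) ->
  continuous (fun x => \sum_(i <- s) f i x).
Proof.
move=> fc; elim: s => [|a s IH].
  under eq_fun do rewrite big_nil; exact: cst_continuous.
under eq_fun do rewrite big_cons.
by move=> x; apply: cvgD; [exact: fc|exact: IH].
Qed.

Lemma enorm_continuous (R : realType) (d : nat) : continuous (@enorm R d).
Proof.
move=> x; apply: continuous_comp; last exact: sqrt_continuous.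
apply: sum_continuous => i {}x; under eq_fun do rewrite expr2.
exact: cvgM (@coord_continuous R 1 d ord0 i x) (@coord_continuous R 1 d ord0 i x).
Qed.

Lemma enormN (R : realType) (d : nat) (v : 'rV[R]_d) : enorm (- v) = enorm v.
Proof. by rewrite /enorm; congr Num.sqrt; apply: eq_bigr => i _; rewrite mxE sqrrN. Qed.

Lemma enormB_continuous (R : realType) (d : nat) (v : 'rV[R]_d) :
  continuous (fun x : 'rV[R]_d => enorm (x - v)).
Proof.
move=> x; apply: continuous_comp; last exact: enorm_continuous.
exact: cvgB cvg_id (cvg_cst v).
Qed.

Lemma closure_sublevel (T : topologicalType) (R : realType) (g : T -> R)
  (U : set T) (D : R) : continuous g -> (forall u, U u -> g u <= D) ->
  forall x, closure U x -> g x <= D.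
Proof.
move=> gc gU; have /closure_id cl : closed (g @^-1` [set t | t <= D]).
  by apply: preimage_closed; [move=> x _; exact: gc | exact: closed_le].
have : closure U `<=` g @^-1` [set t | t <= D] by rewrite cl; exact: closureS.
by apply.
Qed.

Lemma closure_enormB_le (R : realType) (d : nat) (U : set 'rV[R]_d) (D : R) :
  (forall u v, U u -> U v -> enorm (u - v) <= D) ->
  forall x y, closure U x -> closure U y -> enorm (x - y) <= D.
Proof.
move=> UD x y Ux Uy.
have Ux_v v : U v -> enorm (x - v) <= D.
  move=> Uv; apply: (closure_sublevel (@enormB_continuous R d v)) Ux => u Uu.
  exact: UD.
rewrite -enormN opprB; apply: (closure_sublevel (@enormB_continuous R d x)) Uy => v Uv.
by rewrite -enormN opprB; exact: Ux_v.
Qed.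

Lemma diam_enormB_le (R : realType) (d : nat) (U : set 'rV[R]_d) (D : R) :
  diam U = D%:E -> forall u v, U u -> U v -> enorm (u - v) <= D.
Proof.
move=> UD u v Uu Uv; rewrite -lee_fin -UD.
by apply: ereal_sup_ubound; exists u => //; exists v.
Qed.

Lemma phi_ge0 (R : realType) (d : nat) (s r theta : R) (x : 'rV[R]_d) :
  0 <= phi s r theta x.
Proof.
rewrite /phi; case: ifP => _ //; case: ifP => _; first exact: powR_ge0.
by rewrite divr_ge0 ?powR_ge0 // exprn_ge0 // sqrtr_ge0.
Qed.

Lemma phi_ge_powR_ratio (R : realType) (d : nat) (s r theta D : R) (x : 'rV[R]_d) :
  0 < r -> 0 <= s -> r <= D -> D <= r `^ theta -> enorm x <= D ->
  (r / D) `^ s <= phi s r theta x.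
Proof.
move=> r0 s0 rD Dt xD.
have D0 : 0 < D by apply: lt_le_trans rD.
have rD0 : 0 <= r / D by rewrite divr_ge0 // ltW.
rewrite /phi; case: ifPn => [_|].
  have -> : 1 = 1 `^ s by rewrite powR1.
  by apply: ge0_ler_powR; rewrite ?nnegrE // ler_pdivrMr // mul1r.
rewrite -leNgt => rx; have x0 : 0 < enorm x by apply: lt_le_trans rx.
case: ifPn => [_|].
  apply: ge0_ler_powR => //; rewrite ?nnegrE ?divr_ge0 ?(ltW r0) ?(ltW x0) //.
  by rewrite ler_pdivlMr // mulrAC ler_pdivrMr // ler_pM2l.
(* only [enorm x = D = r `^ theta] remains, where the two branches agree *)
rewrite -leNgt => tx.
have xe : enorm x = r `^ theta by apply/eqP; rewrite eq_le tx (le_trans xD Dt).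
have -> : D = r `^ theta by apply/eqP; rewrite eq_le Dt -xe xD.
rewrite xe; have rt0 : 0 < r `^ theta by exact: powR_gt0.
suff -> : (r / r `^ theta) `^ s = r `^ (theta * (d%:R - s) + s) / r `^ theta ^+ d
  by [].
apply: ln_inj; rewrite ?posrE.
- exact: powR_gt0 (divr_gt0 r0 rt0).
- by rewrite divr_gt0 ?exprn_gt0 // powR_gt0.
rewrite ln_powR !ln_div ?posrE ?powR_gt0 ?exprn_gt0 // lnXn // !ln_powR.
by rewrite -mulr_natr; ring.
Qed.

(* No measurability of [g] is needed: the integral of a nonnegative function is
   the supremum of the integrals of the simple functions below it. *)
Lemma ge0_le_integralT d (T : measurableType d) (R : realType)
  (mu : {measure set T -> \bar R}) (f g : T -> \bar R) :
  (forall x, (0 <= f x)%E) -> (forall x, (f x <= g x)%E) ->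
  (\int[mu]_x f x <= \int[mu]_x g x)%E.
Proof.
move=> f0 fg; have g0 x : (0 <= g x)%E by apply: le_trans (fg x).
rewrite (ge0_integralTE mu f0) (ge0_integralTE mu g0) /=.
apply: ereal_sup_le => _ [h hf <-]; exists h => //= x.
exact: le_trans (hf x) (fg x).
Qed.

Lemma integralZ_indic d (T : measurableType d) (R : realType)
  (mu : {measure set T -> \bar R}) (k : R) (A : set T) :
  0 <= k -> measurable A -> (\int[mu]_x (k * \1_A x)%:E = k%:E * mu A)%E.
Proof.
move=> k0 mA; under eq_integral do rewrite EFinM.
rewrite ge0_integralZl_EFin //; first by rewrite integral_indic // setIT.
by apply/measurable_realfun.measurable_EFinP; exact: measurable_realfun.measurable_indic.
Qed.

Lemma probability_disjoint_refinement d (T : measurableType d) (R : realType)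
  (mu : probability T R) (X : set T) n (F : 'I_n -> set T) :
  measurable X -> mu (~` X) = 0%E -> (forall i, measurable (F i)) ->
  X `<=` \bigcup_(i in [set: 'I_n]) F i ->
  exists A : 'I_n -> set T, [/\ forall i, measurable (A i),
    forall i, A i `<=` F i, forall i j x, A i x -> A j x -> i = j
    & (\sum_(i < n) mu (A i) = 1)%E].
Proof.
move=> mX muX mF XF.
(* [seqDU] disjointifies families indexed by [nat]. *)
pose G k := oapp F set0 (insub k).
have GE (i : 'I_n) : G i = F i by rewrite /G valK.
have mG k : measurable (G k) by rewrite /G; case: insub => /=.
pose A (i : 'I_n) := seqDU G i.
have mA i : measurable (A i) by apply: measurableD => //; exact: bigsetU_measurable.
have Adisj i j x : A i x -> A j x -> i = j.
  by move=> Ai Aj; apply/val_inj/(trivIset_seqDU G) => //; exists x.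
exists A; split => //; first by move=> i x [+ _]; rewrite /A GE.
set B := \big[setU/set0]_(i < n) A i.
have XB : X `<=` B.
  move=> x /XF [i _ Fix]; rewrite /B /A -bigsetU_seqDU.
  by rewrite -bigcup_mkord; exists i => /=; rewrite ?GE.
have mB : measurable B by exact: bigsetU_measurable.
rewrite -measure_semi_additive_ord // => [|i j _ _ [x []]]; last exact: Adisj.
have muBC : mu (~` B) = 0%E.
  apply/eqP; rewrite -measure_le0 -muX; apply: le_measure; rewrite ?inE.
  - exact: measurableC.
  - exact: measurableC.
  - exact: subsetC.
apply/eqP; rewrite eq_le probability_le1 //= -(probability_setT mu) -(setUv B).
by rewrite -[mu B]adde0 -muBC measureU2 //; exact: measurableC.
Qed.

Lemma energy_ge_sum_sqr (R : realType) (d : nat) (s r theta : R)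
  (mu : probability (borelRd R d) R) n (A : 'I_n -> set 'rV[R]_d)
  (c : 'I_n -> R) :
  (forall i, measurable (A i : set (borelRd R d))) ->
  (forall i j x, A i x -> A j x -> i = j) -> (forall i, 0 <= c i) ->
  (forall i x y, A i x -> A i y -> c i <= phi s r theta (x - y)) ->
  ((\sum_(i < n) c i * fine (mu (A i)) ^+ 2)%:E <= energy s r theta mu)%E.
Proof.
move=> mA Adisj c0 cphi; pose p i := fine (mu (A i)).
have pE i : mu (A i) = (p i)%:E by rewrite fineK // fin_num_measure.
have p0 i : 0 <= p i by rewrite -lee_fin -pE.
pose f x := \sum_(i < n) (c i * p i * \1_(A i) x)%:E.
have f_int : (\int[mu]_x f x = (\sum_(i < n) c i * p i ^+ 2)%:E)%E.
  rewrite ge0_integral_sum // => [|i|i x _]; last 2 first.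
  - apply/measurable_realfun.measurable_EFinP.
    exact/measurable_realfun.measurable_funM/measurable_realfun.measurable_indic.
  - by rewrite lee_fin mulr_ge0 ?mulr_ge0.
  rewrite -sumEFin; apply: eq_bigr => i _.
  rewrite integralZ_indic ?mulr_ge0 // expr2 mulrA [RHS]EFinM; congr (_ * _)%E; exact: pE.
rewrite -f_int /energy; apply: ge0_le_integralT => x.
  by apply: sume_ge0 => i _; rewrite lee_fin mulr_ge0 ?mulr_ge0.
have [[j Ajx]|noA] := pselect (exists j, A j x); last first.
  rewrite /f big1 => [|i _]; first by apply: integral_ge0 => y _; rewrite lee_fin phi_ge0.
  by rewrite indicE memNset ?mulr0 // => Aix; apply: noA; exists i.
rewrite /f (bigD1 j) //= big1 ?adde0 => [|i ij]; last first.
  rewrite indicE memNset ?mulr0 // => Aix.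
  by move: ij; rewrite (Adisj _ _ _ Aix Ajx) eqxx.
rewrite indicE mem_set // mulr1 EFinM -pE -integralZ_indic //.
apply: ge0_le_integralT => y; first by rewrite lee_fin mulr_ge0.
rewrite lee_fin indicE; have [Ajy|nAjy] := pselect (A j y).
  by rewrite mem_set // mulr1; exact: cphi.
by rewrite memNset // mulr0 phi_ge0.
Qed.

Lemma borelRd_closed_measurable (R : realType) (d : nat) (A : set 'rV[R]_d) :
  closed A -> measurable (A : set (borelRd R d)).
Proof.
move=> cA; rewrite -[A]setCK; apply: measurableC.
by apply: sub_sigma_algebra; exact: closed_openC.
Qed.

Lemma energy_ge_cover (R : realType) (d : nat) (X : set 'rV[R]_d)
  (theta s r : R) n (U : 'I_n -> set 'rV[R]_d)
  (mu : probability (borelRd R d) R) :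
  closed X -> 0 <= s -> 0 < r -> X `<=` \bigcup_(i in [set: 'I_n]) U i ->
  (forall i, (r%:E <= diam (U i))%E /\ (diam (U i) <= (r `^ theta)%:E)%E) ->
  mu (~` X) = 0%E ->
  0 < \sum_(i < n) (fine (diam (U i))) `^ s /\
  ((r `^ s / \sum_(i < n) (fine (diam (U i))) `^ s)%:E
     <= energy s r theta mu)%E.
Proof.
move=> cX s0 r0 XU rDt muX; pose D i := fine (diam (U i)).
have DE i : diam (U i) = (D i)%:E.
  have [rD Dt] := rDt i; rewrite fineK // fin_numElt.
  by rewrite (lt_le_trans (ltNyr r) rD) (le_lt_trans Dt (ltry _)).
have rD i : r <= D i by rewrite -lee_fin -DE; exact: (rDt i).1.
have Dt i : D i <= r `^ theta by rewrite -lee_fin -DE; exact: (rDt i).2.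
have D0 i : 0 < D i by exact: lt_le_trans r0 (rD i).
have [A [mA AV Adisj sumA]] := probability_disjoint_refinement
  (borelRd_closed_measurable cX) muX
  (fun i => borelRd_closed_measurable (@closed_closure _ (U i)))
  (subset_trans XU (subset_bigcup (fun i _ => @subset_closure _ (U i)))).
pose c i := (r / D i) `^ s.
have c0 i : 0 < c i by apply: powR_gt0; rewrite divr_gt0.
have cphi i x y : A i x -> A i y -> c i <= phi s r theta (x - y).
  move=> /AV Vx /AV Vy; apply: phi_ge_powR_ratio => //.
  exact: closure_enormB_le (diam_enormB_le (DE i)) _ _ Vx Vy.
have energy_ge := energy_ge_sum_sqr mu mA Adisj (fun i => ltW (c0 i)) cphi.
have sum_p : \sum_i fine (mu (A i)) = 1.
  apply: EFin_inj; rewrite -sumEFin -sumA; apply: eq_bigr => i _.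
  by rewrite fineK // fin_num_measure.
have inv_c i : (c i)^-1 = D i `^ s / r `^ s.
  have cD : c i * D i `^ s = r `^ s by rewrite -powRM ?divfK ?gt_eqF ?divr_ge0 ?ltW.
  by rewrite -cD; field; rewrite (gt_eqF (c0 i)) gt_eqF // powR_gt0.
set S := \sum_(i < n) _.
have sum_inv_c : \sum_i (c i)^-1 = S / r `^ s.
  by rewrite mulr_suml; apply: eq_bigr => i _; exact: inv_c.
have := sum_weighted_sqr_ge (fun i => fine (mu (A i))) c0.
rewrite sum_p expr1n sum_inv_c; set Q := \sum_i _ => QS.
have S_gt0 : 0 < S.
  rewrite lt_def sumr_ge0 ?andbT => [|i _]; last exact: powR_ge0.
  by apply: contraTneq QS => ->; rewrite mul0r mulr0 ler10.
split => //; apply: le_trans energy_ge; rewrite lee_fin ler_pdivrMr //.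
by move: QS; rewrite mulrA ler_pdivlMr ?powR_gt0 // mul1r.
Qed.

Lemma capacity_le_inv (R : realType) (d : nat) (s r theta a : R)
  (X : set 'rV[R]_d) : 0 < a ->
  (forall mu : probability (borelRd R d) R,
     mu (~` X) = 0%E -> (a%:E <= energy s r theta mu)%E) ->
  capacity s r theta X <= a^-1.
Proof.
move=> a0 lb; have : (a%:E <= min_energy s r theta X)%E.
  by apply/ereal_infP => _ [mu [muX ->]]; exact: lb.
rewrite /capacity; case: min_energy => [e| _|]; last 2 first.
- by rewrite invr_ge0 ltW.
- by rewrite leeNy_eq.
by rewrite lee_fin => ae; rewrite lef_pV2 ?posrE // (lt_le_trans a0).
Qed.

Lemma capacity_eq0 (R : realType) (d : nat) (s r theta : R) (X : set 'rV[R]_d) :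
  ~ (exists mu : probability (borelRd R d) R, mu (~` X) = 0%E) ->
  capacity s r theta X = 0.
Proof.
move=> no_mu; rewrite /capacity /min_energy (_ : [set e | _] = set0) ?ereal_inf0 //.
by apply/seteqP; split => // e [mu [muX _]]; apply: no_mu; exists mu.
Qed.

Theorem lemma5p2 (R : realType) (d : nat) (X : set 'rV[R]_d)
  (theta s : R) :
  compact X -> 0 < theta -> theta <= 1 -> 0 <= s -> s <= d%:R ->
  forall r : R, 0 < r -> r <= 1 ->
  forall (n : nat) (U : 'I_n -> set 'rV[R]_d),
    X `<=` \bigcup_(i in [set: 'I_n]) U i ->
    (forall i, (r%:E <= diam (U i))%E /\ (diam (U i) <= (r `^ theta)%:E)%E) ->
    r `^ s * capacity s r theta X <= \sum_(i < n) (fine (diam (U i))) `^ s.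
Proof.
move=> cX _ _ s0 _ r r0 _ n U XU rDt.
have clX : closed X by apply: compact_closed cX; exact: norm_hausdorff.
have energy_ge mu := @energy_ge_cover R d X theta s r n U mu clX s0 r0 XU rDt.
have [[mu muX]|no_mu] := pselect (exists mu : probability (borelRd R d) R,
    mu (~` X) = 0%E); last first.
  by rewrite capacity_eq0 // mulr0 sumr_ge0 // => i _; exact: powR_ge0.
have [S_gt0 _] := energy_ge mu muX.
have := capacity_le_inv (divr_gt0 (powR_gt0 s r0) S_gt0)
  (fun nu nuX => (energy_ge nu nuX).2).
by rewrite invf_div -ler_pdivlMl ?powR_gt0 // mulrC.
Qed.
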